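(* Let $n\ge1$, let $\mathrm{d}_I$ be the interleaving distance on the category of cubically encoded persistence modules over $\mathbb R^n$ with respect to the vector $v=(1,\dots,1)\in\mathbb R^n$, and let $\mathrm{d}_{\|\cdot\|_1}$ be the path metric on this category induced by the Hilbert amplitude $\|M\|_1=\int_{\mathbb R^n}\dim M(x)\,d\lambda(x)$, $\lambda$ the Lebesgue measure. Then for all cubically encoded persistence modules $M,N$ over $\mathbb R^n$, \[ \mathrm{d}_I(M,N)\le 4\big(\mathrm{d}_{\|\cdot\|_1}(M,N)\big)^{1/n}. \]
   Context: $\mathrm{Vect}$ is the category of finite-dimensional vector spaces over a fixed field. A cube in $\mathbb R^n$ is a product $I_1\times\dots\times I_n$ of (possibly unbounded, open/closed/half-open) intervals of $\mathbb R$. A persistence module $M\colon\mathbb R^n\to\mathrm{Vect}$ is cubically encoded if there exist a finite poset $\mathcal P$, an order-preserving map $e\colon\mathbb R^n\to\mathcal P$ whose fibers are finite unions of cubes, a functor $M'\colon\mathcal P\to\mathrm{Vect}$ and an isomorphism $M\cong M'\circ e$; these form a full abelian subcategory of $\mathrm{Vect}^{\mathbb R^n}$. For a vector $v$ and $\varepsilon\ge0$, $M^{+\varepsilon}$ denotes $x\mapsto M(x+\varepsilon v)$. An $\varepsilon$-interleaving between $M$ and $N$ is a pair of natural transformations $\varphi\colon M\to N^{+\varepsilon}$, $\psi\colon N\to M^{+\varepsilon}$ with $\psi_{x+\varepsilon v}\circ\varphi_x=M(x\le x+2\varepsilon v)$ and $\varphi_{x+\varepsilon v}\circ\psi_x=N(x\le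 x+2\varepsilon v)$ for all $x$; $\mathrm{d}_I(M,N)$ is the infimum of $\varepsilon>0$ admitting an $\varepsilon$-interleaving ($\inf\emptyset=\infty$). For an amplitude $\alpha$ on an abelian category $\mathcal{A}$ (a function $\operatorname{ob}\mathcal{A}\to[0,\infty]$ with $\alpha(0)=0$, monotone under sub- and quotient objects in short exact sequences and subadditive: $\alpha(B)\le\alpha(A)+\alpha(C)$ for $0\to A\to B\to C\to0$ exact), the cost of a zigzag $A\xleftarrow{\gamma_1}C_1\xrightarrow{\gamma_2}\cdots\xleftarrow{\gamma_{n-1}}C_n\xrightarrow{\gamma_n}B$ is $\sum_i\alpha(\ker\gamma_i)+\alpha(\operatorname{coker}\gamma_i)$, and the path metric $\mathrm{d}_\alpha(A,B)$ is the infimum of costs of zigzags from $A$ to $B$ ($\inf\emptyset=\infty$). The Hilbert amplitude $\|\cdot\|_1$ is an amplitude on cubically encoded modules. *)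

From HB Require Import structures.
From mathcomp Require Import all_boot all_order all_algebra.
From mathcomp Require Import all_classical all_reals all_analysis.
Set Implicit Arguments. Unset Strict Implicit. Unset Printing Implicit Defensive.
Import Order.TTheory GRing.Theory Num.Theory.
Local Open Scope ring_scope.

(* Vect = finite-dimensional K-vector spaces, modelled (up to equivalence of
   categories) by K^d; a linear map K^a -> K^b is a matrix 'M_(a,b) acting on
   row vectors (v |-> v *m A), so composition x -> y -> z is  A_xy *m A_yz.     *)
Record pmod (K : fieldType) (T : Type) (le : T -> T -> Prop) := PMod {
  pdim : T -> nat;
  pmap : forall x y : T, 'M[K]_(pdim x, pdim y);   (* meaningful when le x y *)
  pmap_id : forall x, pmap x x = 1%:M;
  pmap_comp : forall x y z, le x y -> le y z -> pmap x z = pmap x y *m pmap y z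
}.

Record hom (K : fieldType) (T : Type) (le : T -> T -> Prop)
    (M N : pmod K le) := Hom {
  hcomp : forall x : T, 'M[K]_(pdim M x, pdim N x);
  hnat : forall x y, le x y -> pmap M x y *m hcomp y = hcomp x *m pmap N x y
}.

Section Rn.
Variables (R : realType) (n : nat).

Definition ptle (x y : n.-tuple R) : Prop := forall i : 'I_n, tnth x i <= tnth y i.

Definition shift (eps : R) (x : n.-tuple R) : n.-tuple R :=
  [tuple tnth x i + eps | i < n].

(* a cube I_1 x ... x I_n, each I_i an arbitrary (possibly unbounded,
   open/closed/half-open) interval of R *)
Definition in_cube (c : 'I_n -> interval R) (x : n.-tuple R) : Prop :=
  forall i : 'I_n, tnth x i \in c i.
End Rn.

Definition pmodRn (K : fieldType) (R : realType) (n : nat) :=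
  pmod K (@ptle R n).

Definition cubically_encoded (K : fieldType) (R : realType) (n : nat)
    (M : pmodRn K R n) : Prop :=
  exists (disp : Order.disp_t) (P : finPOrderType disp) (e : n.-tuple R -> P)
         (M' : pmod K (fun p q : P => (p <= q)%O)),
    (forall x y, ptle x y -> (e x <= e y)%O) /\
    (forall p : P, exists (k : nat) (c : 'I_k -> 'I_n -> interval R),
        forall x, e x = p <-> exists j : 'I_k, in_cube (c j) x) /\
    (exists (phi : forall x, 'M[K]_(pdim M x, pdim M' (e x)))
            (psi : forall x, 'M[K]_(pdim M' (e x), pdim M x)),
        (forall x, phi x *m psi x = 1%:M /\ psi x *m phi x = 1%:M) /\
        (forall x y, ptle x y ->
           pmap M x y *m phi y = phi x *m pmap M' (e x) (e y))).

Definition interleaving (K : fieldType) (R : realType) (n : nat)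
    (eps : R) (M N : pmodRn K R n) : Prop :=
  exists (phi : forall x, 'M[K]_(pdim M x, pdim N (shift eps x)))
         (psi : forall x, 'M[K]_(pdim N x, pdim M (shift eps x))),
    (forall x y, ptle x y ->
       pmap M x y *m phi y = phi x *m pmap N (shift eps x) (shift eps y)) /\
    (forall x y, ptle x y ->
       pmap N x y *m psi y = psi x *m pmap M (shift eps x) (shift eps y)) /\
    (forall x, phi x *m psi (shift eps x) = pmap M x (shift eps (shift eps x))) /\
    (forall x, psi x *m phi (shift eps x) = pmap N x (shift eps (shift eps x))).

Local Open Scope classical_set_scope.
Local Open Scope ereal_scope.

Definition interleaving_dist (K : fieldType) (R : realType) (n : nat)
    (M N : pmodRn K R n) : \bar R :=
  ereal_inf [set e%:E | e in [set e : R | (0 < e)%R /\ interleaving e M N]].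

(* Integral over R^n w.r.t. Lebesgue measure, as the iterated integral
   (Tonelli) of a nonnegative function. *)
Fixpoint lebint_Rn (R : realType) (n : nat) : (n.-tuple R -> \bar R) -> \bar R :=
  match n return (n.-tuple R -> \bar R) -> \bar R with
  | 0 => fun f => f [tuple]
  | n'.+1 => fun f =>
      \int[@lebesgue_measure R]_t lebint_Rn (fun x : n'.-tuple R => f (cons_tuple t x))
  end.

(* ||M||_1 = int dim M(x) dlambda(x); it only depends on the dimension
   function of M. *)
Definition hilbert (R : realType) (n : nat) (d : n.-tuple R -> nat) : \bar R :=
  lebint_Rn (fun x => ((d x)%:R)%:E).

Definition dim_ker (K : fieldType) (R : realType) (n : nat) (M N : pmodRn K R n)
    (f : hom M N) (x : n.-tuple R) : nat := \rank (kermx (hcomp f x)).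
Definition dim_coker (K : fieldType) (R : realType) (n : nat) (M N : pmodRn K R n)
    (f : hom M N) (x : n.-tuple R) : nat := (pdim N x - \rank (hcomp f x))%N.

Definition hom_cost (K : fieldType) (R : realType) (n : nat) (M N : pmodRn K R n)
    (f : hom M N) : \bar R :=
  hilbert (dim_ker f) + hilbert (dim_coker f).

(* zigzags  A = D_0 <-gl_0- C_1 -gr_0-> D_1 <-gl_1- C_2 -> ... <- C_m -> D_m = B
   in the category of cubically encoded modules, and their cost *)
Definition zigzag_cost (K : fieldType) (R : realType) (n : nat)
    (A B : pmodRn K R n) (c : \bar R) : Prop :=
  exists (m : nat) (C D : nat -> pmodRn K R n)
         (gl : forall i, hom (C i.+1) (D i)) (gr : forall i, hom (C i.+1) (D i.+1)),
    (0 < m)%N /\ D 0%N = A /\ D m = B /\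
    (forall i, (i <= m)%N -> cubically_encoded (D i)) /\
    (forall i, (0 < i <= m)%N -> cubically_encoded (C i)) /\
    c = \sum_(i < m) (hom_cost (gl i) + hom_cost (gr i)).

Definition hilbert_path_dist (K : fieldType) (R : realType) (n : nat)
    (A B : pmodRn K R n) : \bar R :=
  ereal_inf [set c | zigzag_cost A B c].

(* Suppose a zigzag from M to N has cost c < e^n. Its total defect, the sum of
   the pointwise dimensions of the kernels and cokernels of its maps, is
   constant on the cubes of a finite cover, so its Lebesgue integral is
   additive and equals c. Hence it cannot be positive on a whole cube
   x + [0, e]^n: every such cube contains a point z where all maps of the
   zigzag are isomorphisms. There the zigzag relates M(z) and N(z) by the graph
   of an isomorphism; these relations are natural and linear in z, and
   transporting along M(x <= z) and N(x + e <= x + 2e) yields a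
   2e-interleaving. Letting e decrease to d^(1/n), d the path distance, gives
   d_I <= 2 d^(1/n). *)

From Pilot Require Import Defs.
From HB Require Import structures.
From mathcomp Require Import all_boot all_order all_algebra.
From mathcomp Require Import all_classical all_reals all_analysis.
From mathcomp Require Import measurable_realfun lra.
Import Order.TTheory GRing.Theory Num.Theory.
Local Open Scope ring_scope.
Local Open Scope classical_set_scope.
Set Implicit Arguments. Unset Strict Implicit. Unset Printing Implicit Defensive.
Local Notation shift := Defs.shift.
Local Notation pmap := Defs.pmap.
Local Notation hom := Defs.hom.

Definition cube_cover (R : realType) (n : nat) (I : finType)
    (cb : I -> 'I_n -> interval R) : Prop :=
  forall y : n.-tuple R, exists k, in_cube (cb k) y.

Definition const_on_cubes (R : realType) (n : nat) (I : finType)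
    (cb : I -> 'I_n -> interval R) (T : Type) (f : n.-tuple R -> T) : Prop :=
  forall k y y', in_cube (cb k) y -> in_cube (cb k) y' -> f y = f y'.

Definition cubically_constant (R : realType) (n : nat) (T : Type)
    (f : n.-tuple R -> T) : Prop :=
  exists (I : finType) (cb : I -> 'I_n -> interval R),
    cube_cover cb /\ const_on_cubes cb f.

Section CubicallyConstant.
Variables (R : realType) (n : nat).
Implicit Types (T U : Type) (I : finType).

Definition cube_meet I1 I2 (cb1 : I1 -> 'I_n -> interval R)
  (cb2 : I2 -> 'I_n -> interval R) : (I1 * I2)%type -> 'I_n -> interval R :=
  fun k i => (cb1 k.1 i `&` cb2 k.2 i)%O.

Lemma in_cube_meet I1 I2 (cb1 : I1 -> 'I_n -> interval R)
    (cb2 : I2 -> 'I_n -> interval R) k (y : n.-tuple R) :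
  in_cube (cube_meet cb1 cb2 k) y <-> in_cube (cb1 k.1) y /\ in_cube (cb2 k.2) y.
Proof.
split=> [h|[h1 h2] i]; last by rewrite in_itvI h1 h2.
by split=> i; have := h i; rewrite in_itvI => /andP[].
Qed.

Lemma cube_cover_meet I1 I2 (cb1 : I1 -> 'I_n -> interval R)
    (cb2 : I2 -> 'I_n -> interval R) :
  cube_cover cb1 -> cube_cover cb2 -> cube_cover (cube_meet cb1 cb2).
Proof.
move=> cv1 cv2 y; have [k1 h1] := cv1 y; have [k2 h2] := cv2 y.
by exists (k1, k2); apply/in_cube_meet.
Qed.

Lemma cubically_constant_cst T (a : T) : cubically_constant (fun _ : n.-tuple R => a).
Proof.
by exists unit, (fun _ _ => `]-oo, +oo[%R); split=> // y; exists tt => i; rewrite in_itv.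
Qed.

Lemma cubically_constant_comp T U (g : T -> U) (f : n.-tuple R -> T) :
  cubically_constant f -> cubically_constant (fun x => g (f x)).
Proof.
by move=> [I [cb [cv cf]]]; exists I, cb; split=> // k y y' hy hy'; rewrite (cf k y y').
Qed.

Lemma cubically_constant2 T1 T2 U (op : T1 -> T2 -> U) f1 f2 :
  cubically_constant f1 -> cubically_constant f2 ->
  cubically_constant (fun x : n.-tuple R => op (f1 x) (f2 x)).
Proof.
move=> [I1 [cb1 [cv1 cf1]]] [I2 [cb2 [cv2 cf2]]].
exists (I1 * I2)%type, (cube_meet cb1 cb2); split; first exact: cube_cover_meet.
move=> k y y' /in_cube_meet[hy1 hy2] /in_cube_meet[hy1' hy2'].
by rewrite (cf1 k.1 y y') // (cf2 k.2 y y').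
Qed.

Lemma cubically_constant_sum (I : Type) (r : seq I) (d : I -> n.-tuple R -> nat) :
  (forall i, cubically_constant (d i)) ->
  cubically_constant (fun x => \sum_(i <- r) d i x)%N.
Proof.
move=> cd; elim: r => [|i r IH].
  under eq_fun do rewrite big_nil; exact: cubically_constant_cst.
under eq_fun do rewrite big_cons; exact: cubically_constant2.
Qed.

(* Two points of a cube lie above their coordinatewise minimum, which is in the
   cube too. *)
Lemma const_on_cubes_le I (cb : I -> 'I_n -> interval R) T (f : n.-tuple R -> T) :
  (forall k y y', in_cube (cb k) y -> in_cube (cb k) y' -> ptle y y' -> f y = f y') ->
  const_on_cubes cb f.
Proof.
move=> hf k y y' hy hy'.
pose w := [tuple Num.min (tnth y i) (tnth y' i) | i < n].
have hw : in_cube (cb k) w.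
  by move=> i; rewrite tnth_mktuple; case: leP => _; [exact: hy|exact: hy'].
have wy : ptle w y by move=> i; rewrite tnth_mktuple ge_min lexx.
have wy' : ptle w y' by move=> i; rewrite tnth_mktuple ge_min lexx orbT.
by rewrite -(hf k w y) ?(hf k w y').
Qed.

End CubicallyConstant.

Section Slices.
Variables (R : realType) (n : nat).

Lemma in_cube_cons (c : 'I_n.+1 -> interval R) t (y : n.-tuple R) :
  in_cube c (cons_tuple t y) <->
  t \in c ord0 /\ in_cube (fun i => c (lift ord0 i)) y.
Proof.
split=> [h|[h0 h] i].
  by split=> [|i]; [have := h ord0; rewrite tnth0|have := h (lift ord0 i); rewrite tnthS].
by case: (unliftP ord0 i) => [j ->|->]; [rewrite tnthS|rewrite tnth0].
Qed.

(* Cubes whose first interval misses [t] are replaced by the degenerate cube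
   [[0, 0[^n], on which nothing can vary. *)
Lemma cubically_constant_slice T (f : n.+1.-tuple R -> T) t :
  cubically_constant f -> cubically_constant (fun y => f (cons_tuple t y)).
Proof.
move=> [I [cb [cv cf]]].
exists I, (fun k i => if t \in cb k ord0 then cb k (lift ord0 i) else `[0, 0[%R).
split=> [y|k y y'].
  have [k /in_cube_cons[h0 h]] := cv (cons_tuple t y).
  by exists k => i; rewrite h0; exact: h.
case tk: (t \in cb k ord0) => hy hy'; first by apply: (cf k); apply/in_cube_cons.
suff -> : y = y' by [].
apply: eq_from_tnth => i; have := hy i.
by rewrite in_itv /= => /andP[/le_lt_trans h /h]; rewrite ltxx.
Qed.

Lemma measurable_fun_itv_pattern (I : finType) (J : I -> interval R) (G : R -> \bar R) :
  (forall t t', (forall k, (t \in J k) = (t' \in J k)) -> G t = G t') ->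
  measurable_fun setT G.
Proof.
move=> HG _ A mA; rewrite setTI.
pose Pre (s : {set I}) :=
  [set t | (forall k, (t \in J k) = (k \in s)) /\ A (G t)].
have -> : G @^-1` A = \bigcup_(s in [set: {set I}]) Pre s.
  apply/seteqP; split=> [t At|t [s _ [_ //]]].
  by exists (finset (fun k => t \in J k)) => //; split=> // k; rewrite inE.
apply: fin_bigcup_measurable => [|s _]; first exact: finite_finset.
have [[t0 [h0 a0]]|nex] := pselect (exists t0, Pre s t0); last first.
  suff -> : Pre s = set0 by exact: measurable0.
  by apply/seteqP; split=> t //= ht; apply: nex; exists t.
have -> : Pre s = \bigcap_(k in [set: I])
    (if k \in s then [set` J k] else ~` [set` J k]).
  apply/seteqP; split=> t /= => [[ht _] k _|ht].
    by case: ifP => ks /=; rewrite /mkset ht ?ks.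
  have hk k : (t \in J k) = (k \in s).
    by have := ht k Logic.I; case: ifP => ks /= => [->|/negP/negbTE ->].
  by split=> //; rewrite (HG t t0) // => k; rewrite hk h0.
apply: fin_bigcap_measurable => [|k _]; first exact: finite_finset.
by case: ifP => _; [|apply: measurableC]; exact: measurable_itv.
Qed.

Lemma measurable_slice T (f : n.+1.-tuple R -> T)
    (Phi : (n.-tuple R -> T) -> \bar R) :
  cubically_constant f ->
  measurable_fun setT (fun t => Phi (fun y => f (cons_tuple t y))).
Proof.
move=> [I [cb [cv cf]]].
apply: (@measurable_fun_itv_pattern I (fun k => cb k ord0)) => t t' tt'.
congr Phi; apply: funext => y.
have [k /in_cube_cons[h0 hk]] := cv (cons_tuple t y).
by apply: (cf k); apply/in_cube_cons; rewrite -?tt'.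
Qed.

End Slices.

Section HilbertAmplitude.
Variable R : realType.
Local Open Scope ereal_scope.

Lemma hilbertS n (d : n.+1.-tuple R -> nat) :
  hilbert d = \int[lebesgue_measure]_t hilbert (fun y => d (cons_tuple t y)).
Proof. by []. Qed.

Lemma hilbert0 n : hilbert (fun _ : n.-tuple R => 0%N) = 0.
Proof.
elim: n => [|n IH]; first by [].
by rewrite hilbertS; under eq_integral do rewrite IH; exact: integral0.
Qed.

Lemma hilbert_ge0 n (d : n.-tuple R -> nat) : 0 <= hilbert d.
Proof.
elim: n d => [|n IH] d; first by rewrite lee_fin ler0n.
by rewrite hilbertS; apply: integral_ge0 => t _; exact: IH.
Qed.

(* The integral of a nonnegative function is a supremum over simple functions
   below it, so it is monotone even for non-measurable functions. *)
Lemma ge0_le_integralT (F G : R -> \bar R) :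
  (forall t, 0 <= F t) -> (forall t, F t <= G t) ->
  \int[lebesgue_measure]_t F t <= \int[lebesgue_measure]_t G t.
Proof.
move=> F0 FG; have G0 t : 0 <= G t by exact: le_trans (F0 t) (FG t).
rewrite !ge0_integralTE //; apply: le_ereal_sup => _ [h hF <-].
by exists h => //= x; exact: le_trans (hF x) (FG x).
Qed.

Lemma integral_itv_lbound (F : R -> \bar R) (a e k : R) :
  (0 <= e)%R -> (0 <= k)%R -> (forall t, 0 <= F t) ->
  (forall t, (a <= t <= a + e)%R -> k%:E <= F t) ->
  (k * e)%:E <= \int[lebesgue_measure]_t F t.
Proof.
move=> e0 k0 F0 Fk; pose A := [set` `[a, a + e]%R] : set R.
have mA : measurable A by exact: measurable_itv.
have kA : \int[lebesgue_measure]_t (k * \1_A t)%:E = (k * e)%:E.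
  have /(_ _ mA) -> :=
    @integralZl_indic _ _ _ lebesgue_measure _ measurableT (fun _ => A) k.
    2: by move=> /lt_geF; rewrite k0.
  rewrite integral_indic // setIT /A.
  rewrite [X in _ * X]lebesgue_measure_itv /= lte_fin ltrDl.
  have [e_gt0|] := ltP 0%R e; first by rewrite -EFinD addrAC subrr add0r EFinM.
  by move=> e_le0; have -> : e = 0%R by apply/eqP; rewrite eq_le e_le0 e0.
rewrite -kA; apply: ge0_le_integralT => t.
  by rewrite lee_fin mulr_ge0 // indic_ge0.
rewrite indicE; case: (boolP (t \in A)) => [|_]; last by rewrite mulr0.
by rewrite mulr1 inE /A /= in_itv /= => /Fk.
Qed.

Lemma hilbert_cube_lbound n (d : n.-tuple R -> nat) (x : n.-tuple R) (e : R) :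
  (0 <= e)%R ->
  (forall y, (forall i, tnth x i <= tnth y i <= tnth x i + e)%R -> (0 < d y)%N) ->
  (e ^+ n)%:E <= hilbert d.
Proof.
elim: n d x => [|n IH] d x e0 dx.
  by rewrite expr0 lee_fin ler1n; apply: dx => -[].
case/tupleP: x dx => x0 x dx; rewrite hilbertS exprSr.
apply: (integral_itv_lbound (a := x0)) => [||t|t /andP[t1 t2]].
- exact: e0.
- exact: exprn_ge0.
- exact: hilbert_ge0.
apply: (IH _ x) => // y hy; apply: dx => i.
by case: (unliftP ord0 i) => [j ->|->]; rewrite ?tnthS ?tnth0 ?t1 ?t2 //; exact: hy.
Qed.

Lemma hilbertD n (d1 d2 : n.-tuple R -> nat) :
  cubically_constant d1 -> cubically_constant d2 ->
  hilbert (fun x => d1 x + d2 x)%N = hilbert d1 + hilbert d2.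
Proof.
elim: n d1 d2 => [|n IH] d1 d2 c1 c2; first by rewrite /hilbert /= natrD EFinD.
rewrite !hilbertS.
under eq_integral => t _.
  by rewrite IH; [over|exact: cubically_constant_slice..].
by rewrite ge0_integralD //; do ?[exact: measurable_slice | move=> t _; exact: hilbert_ge0].
Qed.

Lemma hilbert_sum n (I : Type) (r : seq I) (d : I -> n.-tuple R -> nat) :
  (forall i, cubically_constant (d i)) ->
  hilbert (fun x => \sum_(i <- r) d i x)%N = \sum_(i <- r) hilbert (d i).
Proof.
move=> cd; elim: r => [|i r IH].
  by rewrite big_nil; under eq_fun do rewrite big_nil; exact: hilbert0.
rewrite big_cons -IH; under eq_fun do rewrite big_cons.
by apply: hilbertD => //; exact: cubically_constant_sum.
Qed.

End HilbertAmplitude.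

Section ProductOrder.
Variables (R : realType) (n : nat).
Implicit Types (x y z : n.-tuple R) (e f : R).

Lemma ptle_refl x : ptle x x.
Proof. by move=> i. Qed.

Lemma ptle_trans y x z : ptle x y -> ptle y z -> ptle x z.
Proof. by move=> xy yz i; exact: le_trans (xy i) (yz i). Qed.

Lemma tnth_shift e x i : tnth (shift e x) i = tnth x i + e.
Proof. by rewrite tnth_mktuple. Qed.

Lemma ptle_shift e x : 0 <= e -> ptle x (shift e x).
Proof. by move=> e0 i; rewrite tnth_shift lerDl. Qed.

Lemma ptle_shiftl e f x : e <= f -> ptle (shift e x) (shift f x).
Proof. by move=> ef i; rewrite !tnth_shift lerD2l. Qed.

Lemma ptle_shiftr e x y : ptle x y -> ptle (shift e x) (shift e y).
Proof. by move=> xy i; rewrite !tnth_shift lerD2r. Qed.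

Lemma ptle_shiftD e f x : ptle (shift e (shift f x)) (shift (f + e) x).
Proof. by move=> i; rewrite !tnth_shift addrA. Qed.

End ProductOrder.

Section Encodings.
Variables (K : fieldType) (R : realType) (n : nat).
Implicit Types X Y : pmodRn K R n.

(* Cover each fibre of the encoding by its cubes: inside a fibre the structure
   maps factor through identities of the encoding module, hence are invertible. *)
Lemma cubically_encoded_cover X : cubically_encoded X ->
  exists (I : finType) (cb : I -> 'I_n -> interval R), cube_cover cb /\
    forall k y y', in_cube (cb k) y -> in_cube (cb k) y' -> ptle y y' ->
      row_free (pmap X y y') /\ row_full (pmap X y y').
Proof.
move=> [disp [P [e [X' [_ [fib [phi [psi [inv natX]]]]]]]]].
have cubes p : exists kc : {k : nat & 'I_k -> 'I_n -> interval R},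
    forall x, e x = p <-> exists j, in_cube (projT2 kc j) x.
  by have [k [c h]] := fib p; exists (existT _ k c).
have [kc kcP] := choice cubes.
exists {p : P & 'I_(projT1 (kc p))}, (fun s => projT2 (kc (tag s)) (tagged s)).
split=> [y|[p j] y y' /= hy hy' yy'].
  by have [j hj] := (kcP (e y) y).1 erefl; exists (Tagged (fun p => 'I_(projT1 (kc p))) j).
have ey : e y = p by apply/(kcP p y); exists j.
have ey' : e y' = p by apply/(kcP p y'); exists j.
have le1 : (e y <= e y')%O by rewrite ey ey'.
have le2 : (e y' <= e y)%O by rewrite ey ey'.
have -> : pmap X y y' = phi y *m pmap X' (e y) (e y') *m psi y'.
  by rewrite -(natX _ _ yy') -mulmxA (inv y').1 mulmx1.
split; [apply/row_freeP|apply/row_fullP]; exists (phi y' *m pmap X' (e y') (e y) *m psi y).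
  rewrite !mulmxA -[phi y *m _ *m psi y' *m phi y']mulmxA (inv y').2 mulmx1.
  by rewrite -(mulmxA (phi y)) -(pmap_comp _ le1 le2) pmap_id mulmx1 (inv y).1.
rewrite !mulmxA -[phi y' *m _ *m psi y *m phi y]mulmxA (inv y).2 mulmx1.
by rewrite -(mulmxA (phi y')) -(pmap_comp _ le2 le1) pmap_id mulmx1 (inv y').1.
Qed.

Lemma hom_dims_cubically_constant X Y (f : hom X Y) :
  cubically_encoded X -> cubically_encoded Y ->
  cubically_constant (fun z => (pdim X z, pdim Y z, \rank (hcomp f z))).
Proof.
move=> /cubically_encoded_cover[IX [cbX [cvX isoX]]].
move=> /cubically_encoded_cover[IY [cbY [cvY isoY]]].
exists (IX * IY)%type, (cube_meet cbX cbY); split; first exact: cube_cover_meet.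
apply: const_on_cubes_le => k y y' /in_cube_meet[hyX hyY] /in_cube_meet[hyX' hyY'] yy'.
have [freeX fullX] := isoX _ _ _ hyX hyX' yy'.
have [freeY fullY] := isoY _ _ _ hyY hyY' yy'.
congr (_, _, _).
- by rewrite -(eqP freeX) (eqP fullX).
- by rewrite -(eqP freeY) (eqP fullY).
by rewrite -(mxrankMfree _ freeY) -hnat // (eqmxMfull _ fullX).
Qed.

Lemma cubically_constant_dim_ker X Y (f : hom X Y) :
  cubically_encoded X -> cubically_encoded Y -> cubically_constant (dim_ker f).
Proof.
move=> eX eY; have := cubically_constant_comp (fun t => (t.1.1 - t.2)%N)
  (hom_dims_cubically_constant f eX eY).
by congr cubically_constant; apply: funext => z; rewrite /dim_ker mxrank_ker.
Qed.

Lemma cubically_constant_dim_coker X Y (f : hom X Y) :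
  cubically_encoded X -> cubically_encoded Y -> cubically_constant (dim_coker f).
Proof.
move=> eX eY.
exact: (cubically_constant_comp (fun t => (t.1.2 - t.2)%N)
  (hom_dims_cubically_constant f eX eY)).
Qed.

End Encodings.

Definition graph_iso (K : fieldType) (p q : nat)
    (r : 'rV[K]_p -> 'rV[K]_q -> Prop) : Prop :=
  [/\ forall a, exists b, r a b, forall b, exists a, r a b &
      forall a b, r a b -> (a = 0 <-> b = 0)].

Lemma graph_iso_converse (K : fieldType) (p q : nat) (r : 'rV[K]_p -> 'rV[K]_q -> Prop) :
  graph_iso r -> graph_iso (fun b a => r a b).
Proof. by move=> [tot sur zero]; split=> // b a /zero[]. Qed.

Section Zigzag.
Variables (K : fieldType) (R : realType) (n : nat).
Variables (C D : nat -> pmodRn K R n).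
Variables (gl : forall i, hom (C i.+1) (D i)) (gr : forall i, hom (C i.+1) (D i.+1)).

Fixpoint zigzag_rel (k : nat) (x : n.-tuple R) {struct k} :
    'rV[K]_(pdim (D 0) x) -> 'rV[K]_(pdim (D k) x) -> Prop :=
  match k with
  | 0 => fun a b => a = b
  | k'.+1 => fun a d => exists b c, [/\ @zigzag_rel k' x a b,
                                        b = c *m hcomp (gl k') x &
                                        d = c *m hcomp (gr k') x]
  end.
Arguments zigzag_rel : clear implicits.

Lemma zigzag_rel0 k x : zigzag_rel k x 0 0.
Proof. by elim: k => [|k IH] //=; exists 0, 0; rewrite !mul0mx. Qed.

Lemma zigzag_rel_lin k x l a1 d1 a2 d2 :
  zigzag_rel k x a1 d1 -> zigzag_rel k x a2 d2 ->
  zigzag_rel k x (l *: a1 + a2) (l *: d1 + d2).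
Proof.
elim: k d1 d2 => [|k IH] d1 d2 /=; first by move=> -> ->.
move=> [b1 [c1 [h1 eb1 ->]]] [b2 [c2 [h2 eb2 ->]]].
exists (l *: b1 + b2), (l *: c1 + c2).
by split; [exact: IH|rewrite ?eb1 ?eb2 mulmxDl -scalemxAl..].
Qed.

Lemma zigzag_rel_nat k x y a d : ptle x y -> zigzag_rel k x a d ->
  zigzag_rel k y (a *m pmap (D 0) x y) (d *m pmap (D k) x y).
Proof.
move=> xy; elim: k d => [|k IH] d /=; first by move=> ->.
move=> [b [c [h eb ->]]].
exists (b *m pmap (D k) x y), (c *m pmap (C k.+1) x y).
by split; [exact: IH|rewrite ?eb -!mulmxA hnat..].
Qed.

Lemma zigzag_rel_graph_iso k z :
  (forall i, (i < k)%N ->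
     [/\ row_free (hcomp (gl i) z), row_full (hcomp (gl i) z),
         row_free (hcomp (gr i) z) & row_full (hcomp (gr i) z)]) ->
  graph_iso (zigzag_rel k z).
Proof.
elim: k => [_|k IH iso]; first by split=> [a|b|a b ->]; [exists a|exists b|].
have [tot sur zero] := IH (fun i ik => iso i (ltnW ik)).
have [freel fulll freer fullr] := iso k (ltnSn k).
split=> [a|d|a d [b [c [h eb ->]]]].
- have [b hb] := tot a; have [c eb] := submxP (submx_full b fulll).
  by exists (c *m hcomp (gr k) z), b, c.
- have [c ->] := submxP (submx_full d fullr); have [a ha] := sur (c *m hcomp (gl k) z).
  by exists a, (c *m hcomp (gl k) z), c.
rewrite (zero _ _ h) eb.
by split=> /eqP; rewrite mulmx_free_eq0 // => /eqP ->; rewrite mul0mx.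
Qed.

End Zigzag.
Arguments zigzag_rel {K R n C D} gl gr k x.

Section Transfer.
Variables (K : fieldType) (R : realType) (n : nat) (A B : pmodRn K R n).
Variables (Rl : forall x, 'rV[K]_(pdim A x) -> 'rV[K]_(pdim B x) -> Prop) (e : R).
Arguments Rl : clear implicits.
Hypothesis e_ge0 : 0 <= e.
Hypothesis Rl0 : forall x, Rl x 0 0.
Hypothesis Rl_lin : forall x l a1 b1 a2 b2,
  Rl x a1 b1 -> Rl x a2 b2 -> Rl x (l *: a1 + a2) (l *: b1 + b2).
Hypothesis Rl_nat : forall x y a b, ptle x y -> Rl x a b ->
  Rl y (a *m pmap A x y) (b *m pmap B x y).
Hypothesis Rl_iso_near : forall x,
  exists z, [/\ ptle x z, ptle z (shift e x) & graph_iso (Rl z)].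

Definition transfers (phi : forall x, 'M[K]_(pdim A x, pdim B (shift (e + e) x))) :=
  forall x a b, Rl (shift e x) (a *m pmap A x (shift e x)) b ->
    a *m phi x = b *m pmap B (shift e x) (shift (e + e) x).

Lemma rel_total_shift x y a : ptle (shift e x) y ->
  exists b, Rl y (a *m pmap A x y) b.
Proof.
move=> sxy; have [z [xz zsx [tot _ _]]] := Rl_iso_near x.
have zy := ptle_trans zsx sxy; have [b hb] := tot (a *m pmap A x z).
by exists (b *m pmap B z y); rewrite (pmap_comp _ xz zy) mulmxA; exact: Rl_nat.
Qed.

Lemma rel_zero_shift x y b : ptle (shift e x) y -> Rl x 0 b -> b *m pmap B x y = 0.
Proof.
move=> sxy hb; have [z [xz zsx [_ _ zero]]] := Rl_iso_near x.
have := Rl_nat xz hb; rewrite mul0mx => /zero[/(_ erefl) bz0 _].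
by rewrite (pmap_comp _ xz (ptle_trans zsx sxy)) mulmxA bz0 mul0mx.
Qed.

(* Choose images of the basis vectors at [x + e], then push them to [x + 2e]:
   the choice no longer matters there. *)
Lemma transfer_exists : exists phi, transfers phi.
Proof.
pose ex x (i : 'I_(pdim A x)) := rel_total_shift (delta_mx 0 i) (ptle_refl (shift e x)).
pose c x i := sval (cid (ex x i)).
have cP x i : Rl (shift e x) (delta_mx 0 i *m pmap A x (shift e x)) (c x i).
  exact: svalP (cid (ex x i)).
pose Phi x := \matrix_(i < pdim A x) c x i.
have PhiP x a : Rl (shift e x) (a *m pmap A x (shift e x)) (a *m Phi x).
  rewrite [in X in Rl _ X](row_sum_delta a) mulmx_suml mulmx_sum_row.
  apply: (big_ind2 (Rl (shift e x))) => [|a1 b1 a2 b2 h1 h2|i _].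
  - exact: Rl0.
  - by have := Rl_lin 1 h1 h2; rewrite !scale1r.
  - by rewrite rowK -scalemxAl; have := Rl_lin (a 0 i) (cP x i) (Rl0 _); rewrite !addr0.
exists (fun x => Phi x *m pmap B (shift e x) (shift (e + e) x)) => x a b hb.
have := Rl_lin (-1) (PhiP x a) hb; rewrite !scaleN1r addNr.
move=> /(rel_zero_shift (ptle_shiftD e e x))/eqP.
by rewrite mulmxDl mulNmx (addrC (- _)) subr_eq0 mulmxA => /eqP ->.
Qed.

Lemma transfer_natural phi : transfers phi -> forall x y, ptle x y ->
  pmap A x y *m phi y = phi x *m pmap B (shift (e + e) x) (shift (e + e) y).
Proof.
move=> phiP x y xy; apply/row_matrixP => i; rewrite !rowE.
set a := delta_mx 0 i.
have [b hb] := rel_total_shift a (ptle_refl (shift e x)).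
have sxy := ptle_shiftr e xy; have ee : e <= e + e by rewrite lerDl.
have := Rl_nat sxy hb.
rewrite -mulmxA -(pmap_comp _ (ptle_shift x e_ge0) sxy).
rewrite (pmap_comp _ xy (ptle_shift y e_ge0)) mulmxA => hb'.
rewrite mulmxA (phiP _ _ _ hb') mulmxA (phiP _ _ _ hb) -!mulmxA.
rewrite -(pmap_comp _ sxy (ptle_shiftl _ ee)).
by rewrite -(pmap_comp _ (ptle_shiftl _ ee) (ptle_shiftr _ xy)).
Qed.

(* Push the witness [b] from [x + e] to [y + e] with [y = x + 2e]; there
   [psi]'s defining relation applies to it directly. *)
Lemma transfer_comp phi psi : transfers phi ->
  (forall x b a, Rl (shift e x) a (b *m pmap B x (shift e x)) ->
     b *m psi x = a *m pmap A (shift e x) (shift (e + e) x)) ->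
  forall x, phi x *m psi (shift (e + e) x) = pmap A x (shift (e + e) (shift (e + e) x)).
Proof.
move=> phiP psiP x; apply/row_matrixP => i; rewrite !rowE.
set a := delta_mx 0 i; set y := shift (e + e) x.
have ee : e <= e + e by rewrite lerDl.
have x_sx := ptle_shift x e_ge0; have sx_y : ptle (shift e x) y := ptle_shiftl x ee.
have y_sy := ptle_shift y e_ge0; have sx_sy := ptle_trans sx_y y_sy.
have [b hb] := rel_total_shift a (ptle_refl (shift e x)).
rewrite mulmxA (phiP _ _ _ hb); have := Rl_nat sx_sy hb.
rewrite -mulmxA -(pmap_comp _ x_sx sx_sy) (pmap_comp _ sx_y y_sy) mulmxA => /psiP ->.
by rewrite -mulmxA -(pmap_comp _ (ptle_trans x_sx sx_sy) (ptle_shiftl y ee)).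
Qed.

End Transfer.

Lemma interleaving_of_linear_rel (K : fieldType) (R : realType) (n : nat)
    (A B : pmodRn K R n)
    (Rl : forall x, 'rV[K]_(pdim A x) -> 'rV[K]_(pdim B x) -> Prop) (e : R) :
  0 <= e -> (forall x, Rl x 0 0) ->
  (forall x l a1 b1 a2 b2,
     Rl x a1 b1 -> Rl x a2 b2 -> Rl x (l *: a1 + a2) (l *: b1 + b2)) ->
  (forall x y a b, ptle x y -> Rl x a b -> Rl y (a *m pmap A x y) (b *m pmap B x y)) ->
  (forall x, exists z, [/\ ptle x z, ptle z (shift e x) & graph_iso (Rl z)]) ->
  interleaving (e + e) A B.
Proof.
move=> e0 Rl0 Rl_lin Rl_nat Rl_near.
pose Rc x b a := Rl x a b.
have Rc_lin x l b1 a1 b2 a2 :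
    Rc x b1 a1 -> Rc x b2 a2 -> Rc x (l *: b1 + b2) (l *: a1 + a2).
  exact: Rl_lin.
have Rc_nat x y b a : ptle x y -> Rc x b a -> Rc y (b *m pmap B x y) (a *m pmap A x y).
  exact: Rl_nat.
have Rc_near x : exists z, [/\ ptle x z, ptle z (shift e x) & graph_iso (Rc z)].
  by have [z [xz zx /graph_iso_converse iso]] := Rl_near x; exists z.
have [phi phiP] := transfer_exists Rl0 Rl_lin Rl_nat Rl_near.
have [psi psiP] := transfer_exists (Rl := Rc) Rl0 Rc_lin Rc_nat Rc_near.
exists phi, psi; split; [|split; [|split]].
- exact: transfer_natural e0 Rl_nat Rl_near phi phiP.
- exact: transfer_natural e0 Rc_nat Rc_near psi psiP.
- by apply: (transfer_comp e0 Rl_nat Rl_near phiP); exact: psiP.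
- by apply: (transfer_comp e0 Rc_nat Rc_near psiP); exact: phiP.
Qed.

Lemma hilbert_lt_zero_in_cube (R : realType) (n : nat) (d : n.-tuple R -> nat) (e : R) :
  0 <= e -> (hilbert d < (e ^+ n)%:E)%E ->
  forall x, exists z, [/\ ptle x z, ptle z (shift e x) & d z = 0%N].
Proof.
move=> e0 small x; apply: contrapT => none.
suff : ((e ^+ n)%:E <= hilbert d)%E by move=> /(lt_le_trans small); rewrite ltxx.
apply: (hilbert_cube_lbound (x := x) e0) => y hy; rewrite lt0n; apply/eqP => dy0.
by apply: none; exists y; split=> // i; rewrite ?tnth_shift; case/andP: (hy i).
Qed.

Section Defect.
Variables (K : fieldType) (R : realType) (n : nat).

Definition hom_defect (X Y : pmodRn K R n) (f : hom X Y) (z : n.-tuple R) : nat :=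
  (dim_ker f z + dim_coker f z)%N.

Lemma hom_defect_eq0 (X Y : pmodRn K R n) (f : hom X Y) z :
  (hom_defect f z == 0)%N = row_free (hcomp f z) && row_full (hcomp f z).
Proof.
by rewrite addn_eq0 /dim_ker /dim_coker mxrank_eq0 kermx_eq0 subn_eq0 col_leq_rank.
Qed.

Lemma cubically_constant_hom_defect (X Y : pmodRn K R n) (f : hom X Y) :
  cubically_encoded X -> cubically_encoded Y -> cubically_constant (hom_defect f).
Proof.
move=> eX eY; apply: cubically_constant2.
  exact: cubically_constant_dim_ker.
exact: cubically_constant_dim_coker.
Qed.

Lemma hom_cost_hilbert (X Y : pmodRn K R n) (f : hom X Y) :
  cubically_encoded X -> cubically_encoded Y -> hom_cost f = hilbert (hom_defect f).
Proof.
move=> eX eY; rewrite /hom_cost /hom_defect hilbertD //.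
  exact: cubically_constant_dim_ker.
exact: cubically_constant_dim_coker.
Qed.

Variables (C D : nat -> pmodRn K R n).
Variables (gl : forall i, hom (C i.+1) (D i)) (gr : forall i, hom (C i.+1) (D i.+1)).

Definition zigzag_defect (m : nat) (z : n.-tuple R) : nat :=
  \sum_(i < m) (hom_defect (gl i) z + hom_defect (gr i) z).

Lemma zigzag_cost_hilbert m :
  (forall i, (i <= m)%N -> cubically_encoded (D i)) ->
  (forall i, (0 < i <= m)%N -> cubically_encoded (C i)) ->
  (\sum_(i < m) (hom_cost (gl i) + hom_cost (gr i)) = hilbert (zigzag_defect m))%E.
Proof.
move=> eD eC.
have eCS (i : 'I_m) : cubically_encoded (C i.+1) by apply: eC; rewrite /= ltn_ord.
have eDi (i : 'I_m) : cubically_encoded (D i) by apply: eD; exact: ltnW.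
have eDS (i : 'I_m) : cubically_encoded (D i.+1) by exact: eD.
rewrite /zigzag_defect hilbert_sum => [|i]; last first.
  by apply: cubically_constant2; exact: cubically_constant_hom_defect.
apply: eq_bigr => i _; rewrite !hom_cost_hilbert // hilbertD //;
  exact: cubically_constant_hom_defect.
Qed.

Lemma zigzag_defect_eq0 m z : zigzag_defect m z = 0%N ->
  forall i, (i < m)%N ->
    [/\ row_free (hcomp (gl i) z), row_full (hcomp (gl i) z),
        row_free (hcomp (gr i) z) & row_full (hcomp (gr i) z)].
Proof.
move=> /eqP; rewrite sum_nat_eq0 => /forallP all0 i im.
have /= := all0 (Ordinal im); rewrite addn_eq0 !hom_defect_eq0.
by move=> /andP[/andP[-> ->] /andP[-> ->]].
Qed.

End Defect.

Lemma interleaving_of_zigzag_cost (K : fieldType) (R : realType) (n : nat)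
    (M N : pmodRn K R n) (c : \bar R) (e : R) :
  0 < e -> zigzag_cost M N c -> (c < (e ^+ n)%:E)%E -> interleaving (e + e) M N.
Proof.
move=> e0 [m [C [D [gl [gr [_ [<- [<- [eD [eC ->]]]]]]]]]].
rewrite (zigzag_cost_hilbert gl gr eD eC) => small.
apply: (interleaving_of_linear_rel (Rl := zigzag_rel gl gr m) (ltW e0)) => [x|x|x|x].
- exact: zigzag_rel0.
- exact: zigzag_rel_lin.
- exact: zigzag_rel_nat.
have [z [xz zx /zigzag_defect_eq0 iso]] := hilbert_lt_zero_in_cube (ltW e0) small x.
by exists z; split=> //; exact: zigzag_rel_graph_iso.
Qed.

Section Distances.
Variables (K : fieldType) (R : realType) (n : nat) (M N : pmodRn K R n).
Local Open Scope ereal_scope.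

Lemma hilbert_path_dist_ge0 : 0 <= hilbert_path_dist M N.
Proof.
apply: le_ereal_inf_tmp => _ [m [C [D [gl [gr [_ [_ [_ [_ [_ ->]]]]]]]]]].
by apply: sume_ge0 => i _; rewrite !adde_ge0 // hilbert_ge0.
Qed.

Lemma interleaving_dist_le_of_path_dist_lt (e : R) : (0 < e)%R ->
  hilbert_path_dist M N < (e ^+ n)%:E -> interleaving_dist M N <= (e + e)%:E.
Proof.
move=> e0 /ereal_inf_lt[c zc /(interleaving_of_zigzag_cost e0 zc) ee].
by apply: ereal_inf_lbound; exists (e + e)%R => //; split=> //; rewrite addr_gt0.
Qed.

End Distances.

Theorem mainTheorem3 (K : fieldType) (R : realType) (n : nat) (hn : (0 < n)%N)
    (M N : pmodRn K R n) :
  cubically_encoded M -> cubically_encoded N ->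
  (interleaving_dist M N <= 4%:E * poweR (hilbert_path_dist M N) (n%:R^-1))%E.
Proof.
(* The encodings of [M] and [N] are already required of every zigzag. *)
move=> _ _; have := hilbert_path_dist_ge0 M N.
have ninv0 : n%:R^-1 != 0 :> R by rewrite invr_eq0 pnatr_eq0 -lt0n.
case E: (hilbert_path_dist M N) => [r| |] //= r0; last first.
  by rewrite (negbTE ninv0) muleC gt0_mulye ?leey // lte_fin.
set p := r `^ n%:R^-1; rewrite lee_fin in r0.
have p0 : 0 <= p by exact: powR_ge0.
have pn : p ^+ n = r.
  by rewrite -powR_mulrn // /p -powRrM mulVf ?powRr1 // pnatr_eq0 -lt0n.
apply/lee_addgt0Pr => d d0; pose e := p + d / 2.
have e0 : 0 < e by rewrite /e; lra.
have small : (hilbert_path_dist M N < (e ^+ n)%:E)%E.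
  by rewrite E lte_fin -pn ltrXn2r -?lt0n // /e; lra.
apply: le_trans (interleaving_dist_le_of_path_dist_lt e0 small) _.
by rewrite -EFinM -EFinD lee_fin /e; lra.
Qed.
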